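(* Let $p$ be an odd prime, $M$ the sub-add move matrix, and $k$ the $\mathbb Z_p$-order of $M$. Then $\Gamma_{M,\,p}$ contains secondary cycles if and only if $8$ does not divide $k$.
   Context: The sub-add move matrix is $M=\begin{pmatrix}1&-1\\1&1\end{pmatrix}$. $\Gamma_{M,\,p}$ is the directed graph with vertex set $\mathbb Z_p^2$ and arcs $((a,b),(a-b,a+b))$ (mod $p$; loops allowed). The $\mathbb Z_p$-order $k$ of $M$ is the least positive integer with $M^k\equiv I\pmod p$; it equals $4t$ where $t$ is the multiplicative order of $-4$ in $GF(p)$. A directed cycle is a cycle in the underlying undirected graph such that in the induced directed subgraph every vertex has in- and out-degree $1$; a loop is a directed $1$-cycle. A primary cycle is a directed cycle of length $k$; a secondary cycle is a directed cycle that is neither primary nor a $1$-cycle. *)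

From HB Require Import structures.
From mathcomp Require Import all_boot all_order all_algebra.
Set Implicit Arguments. Unset Strict Implicit. Unset Printing Implicit Defensive.
Import GRing.Theory.
Local Open Scope ring_scope.

Definition subadd (p : nat) : 'M['F_p]_2 :=
  \matrix_(i < 2, j < 2) if (i == 0) && (j == 1) then -1 else 1.

(* Gamma_{M,p}: vertex set Z_p^2 (column vectors), arcs v -> M v,
   i.e. (a,b) -> (a - b, a + b). *)
Definition gamma_step (p : nat) (v : 'cV['F_p]_2) : 'cV['F_p]_2 := subadd p *m v.

Definition directed_cycle (p : nat) (s : seq 'cV['F_p]_2) : bool :=
  [&& (0 < size s)%N, uniq s & fcycle (@gamma_step p) s].

Definition has_secondary_cycle (p k : nat) : Prop :=
  exists s : seq 'cV['F_p]_2,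
    [&& directed_cycle s, size s != k & size s != 1%N].

(** The vertex (a, b) stands for a + b i in Z_p[i], on which M acts as
   multiplication by 1 + i: M = 1 + J with J^2 = -1, so M^2 = 2J and M^4 = -4
   is a scalar.  Hence M^(4q + r) = (-4)^q M^r, and as M^r is not scalar for
   0 < r < 4, 4 | k.  Since M is invertible, the directed cycles of the graph
   are exactly the orbits of v |-> M v, and 0 is the only loop.  A nonzero
   vector fixed by the scalar M^(4q) forces M^(4q) = 1, i.e. k | 4q.  For an
   orbit of length d this gives k | 4d, and k | 2d when d is even; if 8 | k
   these force 4 | d, hence k | d, and every nonzero orbit is primary.  If
   k = 4t with t odd, then b = 2 (-4)^((t-1)/2) satisfies b^2 = -1, and
   M^(2t) = b J fixes (1, b), whose orbit is therefore secondary. *)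

From HB Require Import structures.
From mathcomp Require Import all_boot all_order all_algebra zify ring.
Import GRing.Theory.
Local Open Scope ring_scope.
Set Implicit Arguments.
Unset Strict Implicit.
Unset Printing Implicit Defensive.

Lemma ord2P (i : 'I_2) : i = 0 \/ i = 1.
Proof. by case: i => [[|[|//]] lt_i] //; [left | right]; apply: val_inj. Qed.

Lemma mulmx2E (R : pzSemiRingType) m n (A : 'M[R]_(m, 2)) (B : 'M[R]_(2, n)) i j :
  (A *m B) i j = A i 0 * B 0 j + A i 1 * B 1 j.
Proof.
rewrite mxE !big_ord_recl big_ord0 addr0; congr (_ + A i _ * B _ j).
all: exact: val_inj.
Qed.

Section InjectiveOrbits.
Variables (T : finType) (f : T -> T).
Hypothesis f_inj : injective f.

Lemma order_dvdn_iter x n : (order f x %| n)%N = (iter n f x == x).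
Proof.
rewrite [in RHS](divn_eq n (order f x)) addnC iterD iterM (iter_fix _ (iter_order f_inj x)).
have /findex_iter : (n %% order f x < order f x)%N by rewrite ltn_pmod ?order_gt0.
by rewrite eq_sym -(findex_eq0 f) => ->.
Qed.

Lemma ex_cycle_order (P : pred nat) :
  (exists s : seq T, [&& (0 < size s)%N, uniq s & fcycle f s] && P (size s)) <->
  (exists x, P (order f x)).
Proof.
split=> [[[|x s] // /andP[/and3P[_ s_uniq s_cycle] Ps]] | [x Px]].
  by exists x; rewrite (order_cycle s_cycle s_uniq (mem_head x s)).
by exists (orbit f x); rewrite size_orbit order_gt0 orbit_uniq cycle_orbit.
Qed.

End InjectiveOrbits.

Lemma has_secondary_cycleE p k : injective (@gamma_step p) ->
  has_secondary_cycle p k <->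
  exists v, (order (@gamma_step p) v != k) && (order (@gamma_step p) v != 1%N).
Proof. by move=> inj; apply: (@ex_cycle_order _ _ inj [pred n | (n != k) && (n != 1%N)]). Qed.

Section SubAdd.
Variable p : nat.
Hypotheses (p_prime : prime p) (p_odd : odd p).
Local Notation F := 'F_p.
Local Notation M := (subadd p).

Definition quarter_turn : 'M[F]_2 :=
  \matrix_(i, j) if i == j then 0 else if i == 0 then -1 else 1.
Local Notation J := quarter_turn.

Lemma two_neq0 : (2 : F) != 0.
Proof.
rewrite -(dvdn_pcharf (pchar_Fp p_prime)); apply/negP => /(@dvdn_leq _ 2 isT).
by have := prime_gt1 p_prime; move: p_odd; case: p => [|[|[|]]].
Qed.

Lemma subaddE : M = 1 + J.
Proof.
apply/matrixP => i j; rewrite -idmxE !mxE.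
by case: (ord2P i) => ->; case: (ord2P j) => ->; rewrite /= ?addr0 ?add0r.
Qed.

Lemma quarter_turn_sqr : J ^+ 2 = -1.
Proof.
apply/matrixP => i j; rewrite -idmxE expr2 -mulmxE mulmx2E !mxE.
by case: (ord2P i) => ->; case: (ord2P j) => ->; rewrite /= ?mulr0 ?mul0r ?addr0 ?add0r ?mulN1r ?mul1r ?mulr1n ?mulr0n ?oppr0.
Qed.

Lemma subadd_sqr : M ^+ 2 = J *+ 2.
Proof. by rewrite subaddE addrC sqrrD1 quarter_turn_sqr addrAC addNr add0r. Qed.

Local Notation c := (-4 : F).

Lemma neg4_neq0 : c != 0.
Proof. by rewrite oppr_eq0 -[4]/(2 * 2)%:R natrM mulf_neq0 ?two_neq0. Qed.

Lemma subadd_pow4 : M ^+ 4 = c%:M.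
Proof.
rewrite -[4%N]/(2 * 2)%N exprM subadd_sqr exprMn_n quarter_turn_sqr mulNrn.
by rewrite raddfN /= rmorph_nat.
Qed.

Lemma subadd_pow_mul4 q : M ^+ (4 * q) = (c ^+ q)%:M.
Proof. by rewrite exprM subadd_pow4 rmorphXn. Qed.

Lemma subadd_powD4 q r : M ^+ (4 * q + r) = c ^+ q *: M ^+ r.
Proof. by rewrite exprD subadd_pow_mul4 -mulmxE mul_scalar_mx. Qed.

Lemma subadd_pow_mul4_eq1 q : (M ^+ (4 * q) == 1) = (c ^+ q == 1).
Proof. by rewrite subadd_pow_mul4 fmorph_eq1. Qed.

Lemma subadd_pow_offdiag r : (0 < r < 4)%N -> (M ^+ r) 0 1 != 0.
Proof.
case: r => [|[|[|[|//]]]] // _.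
- by rewrite expr1 mxE oppr_eq0 oner_eq0.
- by rewrite subadd_sqr mulmxnE mxE mulNrn oppr_eq0 two_neq0.
- rewrite exprS -mulmxE mulmx2E subadd_sqr !mulmxnE !mxE /=.
  by rewrite mul0rn mulr0 addr0 mul1r mulNrn oppr_eq0 two_neq0.
Qed.

Lemma subadd_fixed_eq0 (v : 'cV[F]_2) : M *m v = v -> v = 0.
Proof.
rewrite subaddE mulmxDl mul1mx -{3}[v]addr0 => /addrI Jv0.
have : J *m (J *m v) = - v by rewrite mulmxA mulmxE -expr2 quarter_turn_sqr mulNmx mul1mx.
by rewrite Jv0 mulmx0 => /eqP; rewrite eq_sym oppr_eq0 => /eqP.
Qed.

Local Notation step := (@gamma_step p).

Lemma iter_gamma_step n v : iter n step v = M ^+ n *m v.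
Proof.
elim: n => [|n IHn]; first by rewrite mul1mx.
by rewrite iterS IHn /gamma_step mulmxA mulmxE -exprS.
Qed.

Lemma gamma_step_inj : injective step.
Proof.
move=> u v /(congr1 (mulmx (c^-1 *: M ^+ 3))).
rewrite /gamma_step !mulmxA -scalemxAl mulmxE -exprSr subadd_pow4.
by rewrite scale_scalar_mx mulVf ?neg4_neq0 // !mul1mx.
Qed.

Lemma order_gamma_step_dvdn v n : (order step v %| n)%N = (M ^+ n *m v == v).
Proof. by rewrite order_dvdn_iter ?iter_gamma_step //; exact: gamma_step_inj. Qed.

Lemma order_gamma_step_eq1 v : (order step v == 1%N) = (v == 0).
Proof.
rewrite -dvdn1 order_gamma_step_dvdn expr1.
by apply/eqP/eqP => [/subadd_fixed_eq0 | ->]; last by rewrite mulmx0.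
Qed.

Variable k : nat.
Hypothesis subadd_order : M ^+ k = 1.

Lemma four_dvd_order : (4 %| k)%N.
Proof.
have := subadd_order; rewrite {1}(divn_eq k 4) mulnC subadd_powD4.
move/(congr1 ( *:%R (c ^- (k %/ 4)))); rewrite scalerA mulVf ?expf_neq0 ?neg4_neq0 //.
rewrite scale1r -idmxE scalemx1 => Mr_scalar.
have := @subadd_pow_offdiag (k %% 4); rewrite Mr_scalar mxE mulr0n eqxx ltn_pmod // andbT.
by move=> /implyP; rewrite implybF -eqn0Ngt.
Qed.

Lemma order_gamma_step_secondary :
  ~~ (8 %| k)%N -> exists2 v, v != 0 & order step v != k.
Proof.
move=> k8.
have [t kE] : exists t, k = (4 * t)%N.
  by exists (k %/ 4)%N; rewrite mulnC divnK // four_dvd_order.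
have [h tE] : exists h, t = (2 * h + 1)%N.
  by exists (t %/ 2)%N; move: k8; rewrite kE; lia.
have ct : c ^+ t = 1 by apply/eqP; rewrite -subadd_pow_mul4_eq1 -kE subadd_order.
set b := 2 * c ^+ h.
have b2 : b ^+ 2 = -1.
  by rewrite -ct tE addn1 (exprS c) mulnC exprM /b; ring.
set v : 'cV[F]_2 := \col_i (if i == 0 then 1 else b).
exists v.
  by apply/eqP => /matrixP/(_ 0 0); rewrite !mxE /=; apply/eqP/oner_neq0.
have fix_v : M ^+ (2 * t) *m v = v.
  rewrite (_ : 2 * t = 4 * h + 2)%N; last by lia.
  rewrite subadd_powD4 subadd_sqr -scaler_nat scalerA -scalemxAl mulrC -/b.
  apply/matrixP => i j; rewrite mxE mulmx2E !mxE.
  case: (ord2P i) => -> /=; last by rewrite mul1r mul0r addr0 mulr1.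
  by rewrite mul0r add0r mulN1r mulrN -expr2 b2 opprK.
have d_le : (order step v <= 2 * t)%N.
  by apply: dvdn_leq; [lia | rewrite order_gamma_step_dvdn fix_v].
by apply/eqP => d_k; lia.
Qed.

Hypothesis k_gt0 : (0 < k)%N.
Hypothesis subadd_order_min : forall j, (0 < j)%N -> M ^+ j = 1 -> (k <= j)%N.

Lemma subadd_pow_eq1 n : (M ^+ n == 1) = (k %| n)%N.
Proof.
apply/eqP/idP => [Mn1 | /dvdnP[m ->]]; last by rewrite mulnC exprM subadd_order expr1n.
rewrite /dvdn; apply: contraTT (ltn_pmod n k_gt0); rewrite -leqNgt => rn.
apply: subadd_order_min; first by rewrite lt0n.
by move: Mn1; rewrite {1}(divn_eq n k) exprD mulnC exprM subadd_order expr1n mul1r.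
Qed.

Lemma fixed_pow_mul4_dvdn q (v : 'cV[F]_2) : v != 0 -> M ^+ (4 * q) *m v = v -> (k %| 4 * q)%N.
Proof.
rewrite -subadd_pow_eq1 subadd_pow_mul4_eq1 subadd_pow_mul4 mul_scalar_mx => v_neq0.
move/eqP; rewrite -subr_eq0 -{2}[v]scale1r -scalerBl scaler_eq0 (negbTE v_neq0).
by rewrite orbF subr_eq0.
Qed.

Lemma order_gamma_step_primary v : (8 %| k)%N -> v != 0 -> order step v = k.
Proof.
move=> k8 v_neq0; set d := order step v.
have k_dvd q : (d %| 4 * q)%N -> (k %| 4 * q)%N.
  by rewrite order_gamma_step_dvdn => /eqP; exact: fixed_pow_mul4_dvdn.
have d_even : (2 %| d)%N.
  by move: (dvdn_trans k8 (k_dvd d (dvdn_mull 4 (dvdnn d)))); lia.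
have k_2d : (k %| 2 * d)%N.
  have d2E : (2 * d = 4 * (d %/ 2))%N by lia.
  by rewrite d2E k_dvd // -d2E dvdn_mull.
have d4 : (4 %| d)%N by move: (dvdn_trans k8 k_2d); lia.
have k_d : (k %| d)%N.
  have dE : d = (4 * (d %/ 4))%N by lia.
  by rewrite dE k_dvd // -dE.
by apply/eqP; rewrite eqn_dvd k_d andbT /d order_gamma_step_dvdn subadd_order mul1mx.
Qed.

End SubAdd.

Theorem corollary7p3 (p k : nat) :
  prime p -> odd p ->
  (* k is the Z_p-order of M: least positive k with M^k = I (mod p) *)
  (0 < k)%N -> subadd p ^+ k = 1 ->
  (forall j : nat, (0 < j)%N -> subadd p ^+ j = 1 -> (k <= j)%N) ->
  (has_secondary_cycle p k <-> ~~ (8 %| k)%N).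
Proof.
move=> p_prime p_odd k_gt0 Mk k_min.
rewrite has_secondary_cycleE; last exact: gamma_step_inj.
split=> [[v /andP[vk v1]] | k8].
  apply: contra vk => k8; apply/eqP/order_gamma_step_primary => //.
  by rewrite -order_gamma_step_eq1.
have [v v_neq0 vk] := order_gamma_step_secondary p_prime p_odd Mk k8.
by exists v; rewrite vk order_gamma_step_eq1.
Qed.
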